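(* The map $\phi:\mathfrak{S}_n\to\mathbf{I}_n$ (defined in the context) is such that for every $\pi\in\mathfrak{S}_n$, $$(\mathrm{exc},\mathrm{rlmin},\mathrm{lmaxz})(\pi)=(\mathrm{rep},\mathrm{rlmin},\mathrm{zero})(\phi(\pi)).$$
   Context: $\mathbf{I}_n=\{(e_1,\dots,e_n)\in\mathbb{N}^n:0\le e_i<i\}$ is the set of inversion sequences of length $n$. For $\pi=\pi_1\cdots\pi_n\in\mathfrak{S}_n$, $\phi(\pi)=(e_1,\dots,e_n)$ is defined by setting $e_n=\pi_n-1$ and then, for $i=n-1,n-2,\dots,1$: if $\pi_i\le i$, set $e_i=\pi_i-1$; otherwise ($\pi_i>i$), if $\pi_i$ is the $k$-th largest element of $\{\pi_1,\dots,\pi_i\}$, set $e_i$ to be the $k$-th smallest element of the set $\{e_j:i<j\le n\}$. Permutation statistics: $\mathrm{exc}(\pi)=|\{i\in[n-1]:\pi_i>i\}|$; $\mathrm{rlmin}(\pi)$ = number of $i$ with $\pi_i<\pi_j$ for all $j>i$; $\mathrm{lmaxz}(\pi)$ = one plus the number of left-to-right maxima of $\pi$ (letters greater than all letters to their left) occurring before the letter $1$. Inversion-sequence statistics: $\mathrm{dist}(e)=|\{e_1,\dots,e_n\}\setminus\{0\}|$; $\mathrm{rep}(e)=n-1-\mathrm{dist}(e)$; $\mathrm{rlmin}(e)=|\{i\in[n]:e_i<e_j\text{ for all }j>i\}|$; $\mathrm{zero}(e)=|\{i:e_i=0\}|$. *)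

From mathcomp Require Import all_boot all_fingroup.
Set Implicit Arguments. Unset Strict Implicit. Unset Printing Implicit Defensive.

(* Words are sequences of naturals, read 1-indexed: s_i := nth 0 s (i-1). *)

Definition perm_word (n : nat) (p : 'S_n) : seq nat :=
  [seq (p i).+1 | i <- enum 'I_n].

Definition at1 (s : seq nat) (i : nat) : nat := nth 0 s i.-1.

(* phi_suf w d = [:: e_(n-d+1); ...; e_n] where n = size w. *)
Fixpoint phi_suf (w : seq nat) (d : nat) : seq nat :=
  match d with
  | 0 => [::]
  | d'.+1 =>
    let s := phi_suf w d' in
    let i := size w - d' in
    let pi := at1 w i in
    let ei :=
      if d' == 0 then pi.-1
      else if pi <= i then pi.-1
      else
        (* pi is the k-th largest element of {pi_1,...,pi_i} *)
        let k := count (fun x => pi <= x) (take i w) in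
        nth 0 (sort leq (undup s)) k.-1
    in ei :: s
  end.

Definition phi (w : seq nat) : seq nat := phi_suf w (size w).

Definition exc (w : seq nat) : nat :=
  count (fun i => i < at1 w i) (iota 1 (size w).-1).

Definition rlmin (s : seq nat) : nat :=
  count (fun i => all (fun j => at1 s i < at1 s j) (iota i.+1 (size s - i)))
        (iota 1 (size s)).

Definition lmaxz (w : seq nat) : nat :=
  (count (fun i => all (fun j => at1 w j < at1 w i) (iota 1 i.-1))
         (iota 1 (index 1 w))).+1.

Definition dist (e : seq nat) : nat := size (undup [seq x <- e | x != 0]).
Definition rep (e : seq nat) : nat := (size e).-1 - dist e.
Definition zero (e : seq nat) : nat := count (pred1 0) e.

From mathcomp Require Import all_boot all_fingroup zify.

Set Implicit Arguments. Unset Strict Implicit. Unset Printing Implicit Defensive.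

(* Call j a non-excedance of the permutation word pi when pi_j <= j or j = n.
   By downward induction on i, the set of entries {e_j : j > i} of phi(pi) is
   exactly {pi_j - 1 : j > i non-excedance}, and these values are distinct.
   The induction goes through because at an excedance i the rank k of pi_i
   among pi_1..pi_i never exceeds the number of non-excedances after i, so e_i
   is one of the values already present.  Hence
   - the distinct entries of phi(pi) are the n - exc(pi) values pi_j - 1 over
     non-excedances, one of them 0, which gives rep = exc;
   - pi_i is a right-to-left minimum iff i is a non-excedance whose later
     non-excedance values are larger, iff e_i is a right-to-left minimum;
   - e_j = 0 exactly at the position of the letter 1 and at the excedances
     before it of rank k = 1, i.e. the left-to-right maxima before 1. *)

Lemma map_at1_drop (s : seq nat) i :
  map (at1 s) (iota i.+1 (size s - i)) = drop i s.
Proof.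
apply: (@eq_from_nth _ 0) => [|j]; first by rewrite size_map size_iota size_drop.
rewrite size_map size_iota => hj.
by rewrite (nth_map 0) ?size_iota // nth_iota // nth_drop /at1; congr nth; lia.
Qed.

Lemma map_at1_take (s : seq nat) i : i <= size s ->
  map (at1 s) (iota 1 i) = take i s.
Proof.
move=> hi; apply: (@eq_from_nth _ 0) => [|j].
  by rewrite size_map size_iota size_take_min; lia.
rewrite size_map size_iota => hj.
by rewrite (nth_map 0) ?size_iota // nth_iota // nth_take // /at1; congr nth; lia.
Qed.

Lemma map_at1 (s : seq nat) : map (at1 s) (iota 1 (size s)) = s.
Proof. by rewrite map_at1_take // take_size. Qed.

Lemma count_leq_iota n v : v <= n -> count (fun x => x <= v) (iota 1 n) = v.
Proof.
move=> hv; rewrite -(subnKC hv) iotaD count_cat.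
rewrite (@eq_in_count _ _ predT) ?count_predT ?size_iota; last first.
  by move=> x; rewrite mem_iota /=; lia.
rewrite (@eq_in_count _ _ pred0) ?count_pred0 ?addn0 //.
by move=> x; rewrite mem_iota /=; lia.
Qed.

Lemma rlmin_drop s :
  rlmin s = count (fun i => all (fun y => at1 s i < y) (drop i s)) (iota 1 (size s)).
Proof. by apply: eq_count => i /=; rewrite -map_at1_drop all_map. Qed.

Lemma dist_undup e : dist e = size (undup e) - (0 \in e).
Proof.
rewrite /dist -filter_undup size_filter -(count_predC (pred1 0) (undup e)).
by rewrite (count_uniq_mem _ (undup_uniq e)) mem_undup addKn.
Qed.

Lemma nth_sort_undup_eq0 (s : seq nat) m : 0 \in s -> m < size (undup s) ->
  (nth 0 (sort leq (undup s)) m == 0) = (m == 0).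
Proof.
set L := sort leq (undup s) => s0 hm.
have L_ltn : sorted ltn L.
  by rewrite ltn_sorted_uniq_leq sort_uniq undup_uniq sort_sorted //; apply: leq_total.
have nth_pos j : 0 < j < size L -> nth 0 L j != 0.
  move=> /andP[j0 hj]; have := sorted_ltn_nth ltn_trans 0 L_ltn.
  by move=> /(_ 0 j); rewrite !inE (leq_ltn_trans _ hj) // => /(_ isT hj j0); lia.
have L0 : 0 \in L by rewrite mem_sort mem_undup.
have i0 : index 0 L = 0.
  apply/eqP; apply: contraT => hi; have := nth_pos (index 0 L).
  by rewrite nth_index // index_mem L0 lt0n hi eqxx => /(_ isT).
case: m hm => [|m] hm; first by have := nth_index 0 L0; rewrite i0 => ->.
by apply/negbTE/nth_pos; rewrite size_sort.
Qed.

Lemma at1_mem (s : seq nat) j : 0 < j <= size s -> at1 s j \in s.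
Proof. by case/andP=> j0 hj; apply: mem_nth; rewrite prednK. Qed.

Lemma at1_inj (s : seq nat) j1 j2 : uniq s ->
  0 < j1 <= size s -> 0 < j2 <= size s -> at1 s j1 = at1 s j2 -> j1 = j2.
Proof.
move=> us /andP[a1 b1] /andP[a2 b2] /eqP.
by rewrite /at1 nth_uniq ?prednK // => /eqP; lia.
Qed.

Lemma at1_mem_drop (s : seq nat) i j : i < j <= size s -> at1 s j \in drop i s.
Proof. by move=> hj; rewrite -map_at1_drop map_f // mem_iota; lia. Qed.

Definition lrmax (s : seq nat) i := all (fun j => at1 s j < at1 s i) (iota 1 i.-1).

Lemma lrmax_count_take (s : seq nat) i : 0 < i <= size s ->
  lrmax s i = ((count (fun x => at1 s i <= x) (take i s)).-1 == 0).
Proof.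
move=> hi; rewrite -map_at1_take ?count_map; last lia.
rewrite (_ : iota 1 i = iota 1 i.-1 ++ [:: i]); last first.
  by rewrite {1}(_ : i = i.-1 + 1) ?iotaD ?add1n ?prednK //; lia.
rewrite count_cat /= leqnn addn1 /= eqn0Ngt -has_count -all_predC.
by apply: eq_all => j /=; rewrite -ltnNge.
Qed.

Section PhiEntries.

Variable w : seq nat.
Local Notation n := (size w).

Definition nonexc j := (j == n) || (at1 w j <= j).

Lemma size_phi_suf d : size (phi_suf w d) = d.
Proof. by elim: d => //= d ->. Qed.

Lemma size_phi : size (phi w) = n.
Proof. exact: size_phi_suf. Qed.

Lemma drop_phi i : i <= n -> drop i (phi w) = phi_suf w (n - i).
Proof.
move=> hi; rewrite /phi -{1}(subnKC hi); elim: i (n - i) {hi} => [|i IH] d.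
  by rewrite drop0.
by rewrite addSn /= IH.
Qed.

Lemma at1_phi i : 0 < i <= n -> at1 (phi w) i = head 0 (phi_suf w (n - i).+1).
Proof.
move=> hi; rewrite /at1 -[i.-1]addn0 -nth_drop drop_phi; last lia.
by rewrite (_ : n - i.-1 = (n - i).+1) //; lia.
Qed.

Lemma at1_phi_nonexc i : 0 < i <= n -> nonexc i -> at1 (phi w) i = (at1 w i).-1.
Proof.
move=> hi; rewrite at1_phi //= subKn; last lia.
by case/orP=> [/eqP ->|->]; rewrite ?subnn //; case: ifP.
Qed.

Lemma at1_phi_exc i : 0 < i < n -> i < at1 w i ->
  at1 (phi w) i = nth 0 (sort leq (undup (drop i (phi w))))
                         (count (fun x => at1 w i <= x) (take i w)).-1.
Proof.
move=> hi hexc; rewrite at1_phi /= ?subKn ?drop_phi; try lia.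
by rewrite leqNgt hexc (_ : (n - i == 0) = false) //; lia.
Qed.

Lemma count_nonexc : 0 < n -> count nonexc (iota 1 n) = n - exc w.
Proof.
move=> n0; have -> : iota 1 n = iota 1 n.-1 ++ [:: n].
  by rewrite {1}(_ : n = n.-1 + 1) ?iotaD ?add1n ?prednK //; lia.
have := count_predC (fun i => i < at1 w i) (iota 1 n.-1).
rewrite count_cat /= {2}/nonexc eqxx /exc size_iota.
rewrite (@eq_in_count _ nonexc (predC (fun i => i < at1 w i))) /=; first lia.
move=> i; rewrite mem_iota /= -leqNgt => hi.
by rewrite /nonexc (_ : (i == n) = false) //; apply/eqP; lia.
Qed.

End PhiEntries.

Section PermutationWord.

Variable w : seq nat.
Hypothesis w_perm : perm_eq w (iota 1 (size w)).
Local Notation n := (size w).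

Lemma at1_perm_range j : 0 < j <= n -> 0 < at1 w j <= n.
Proof.
move=> hj; have := at1_mem hj.
by rewrite (perm_mem w_perm) mem_iota; lia.
Qed.

Lemma at1_perm_inj j1 j2 : 0 < j1 <= n -> 0 < j2 <= n ->
  at1 w j1 = at1 w j2 -> j1 = j2.
Proof.
by apply: at1_inj; rewrite (perm_uniq w_perm) iota_uniq.
Qed.

Lemma count_leq_perm v : v <= n -> count (fun x => x <= v) w = v.
Proof. by move=> hv; rewrite (seq.permP w_perm) count_leq_iota. Qed.

Lemma index1_lt : 0 < n -> index 1 w < n.
Proof. by move=> n0; rewrite index_mem (perm_mem w_perm) mem_iota; lia. Qed.

Lemma at1_index1 : 0 < n -> at1 w (index 1 w).+1 = 1.
Proof. by move=> n0; rewrite /at1 nth_index // -index_mem index1_lt. Qed.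

Lemma pred_at1_eq0 j : 0 < j <= n -> ((at1 w j).-1 == 0) = (j == (index 1 w).+1).
Proof.
move=> hj; have n0 : 0 < n by lia.
case: (j =P (index 1 w).+1) => [->|ne1]; first by rewrite at1_index1.
have hq := index1_lt n0; have h1 := at1_index1 n0; have hr := at1_perm_range hj.
by apply/eqP => e; apply: ne1; apply: (at1_perm_inj hj); lia.
Qed.

Lemma exc_rank_lt i : 0 < i < n -> i < at1 w i ->
  (count (fun x => at1 w i <= x) (take i w)).-1 < count (nonexc w) (iota i.+1 (n - i)).
Proof.
move=> hi hexc.
have last_nonexc : 0 < count (nonexc w) (iota i.+1 (n - i)).
  rewrite -has_count; apply/hasP; exists n; last by rewrite /nonexc eqxx.
  by rewrite mem_iota; lia.
suff: count (fun x => at1 w i <= x) (take i w) <= count (nonexc w) (iota i.+1 (n - i)).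
  by lia.
(* Each value > i among pi_1..pi_i is matched by a value <= i among
   pi_(i+1)..pi_n, and a position j > i with pi_j <= i is a non-excedance. *)
have left_big :
    count (fun x => at1 w i <= x) (take i w) <= count (predC (fun x => x <= i)) (take i w).
  by apply: sub_count => x /=; lia.
have right_small :
    count (fun x => x <= i) (drop i w) <= count (nonexc w) (iota i.+1 (n - i)).
  rewrite -map_at1_drop count_map.
  rewrite (@eq_in_count _ (preim (at1 w) _) (fun j => (at1 w j <= i) && (i < j))).
    by apply: sub_count => j /= /andP[h1 h2]; rewrite /nonexc; lia.
  by move=> j; rewrite mem_iota /= => /andP[-> _]; rewrite andbT.
have := count_predC (fun x => x <= i) (take i w); rewrite size_takel; last lia.
have := count_cat (fun x => x <= i) (take i w) (drop i w).
rewrite cat_take_drop count_leq_perm; lia.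
Qed.

Definition nonexc_values i :=
  [seq (at1 w j).-1 | j <- iota i.+1 (n - i) & nonexc w j].

Lemma mem_nonexc_values i x : (x \in nonexc_values i) =
  has (fun j => nonexc w j && ((at1 w j).-1 == x)) (iota i.+1 (n - i)).
Proof.
apply/mapP/hasP => [[j] | [j hj /andP[hN /eqP <-]]]; last by exists j; rewrite // mem_filter hN.
by rewrite mem_filter => /andP[hN hj] ->; exists j; rewrite // hN eqxx.
Qed.

Lemma size_undup_nonexc_values i (s : seq nat) : s =i nonexc_values i ->
  size (undup s) = count (nonexc w) (iota i.+1 (n - i)).
Proof.
move=> hs; have -> : count (nonexc w) (iota i.+1 (n - i)) = size (nonexc_values i).
  by rewrite size_map size_filter.
apply: perm_size; apply: uniq_perm => [||x]; rewrite ?undup_uniq ?mem_undup ?hs //.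
rewrite map_inj_in_uniq ?filter_uniq ?iota_uniq // => j1 j2.
rewrite !mem_filter !mem_iota => /andP[_ h1] /andP[_ h2].
have := at1_perm_range (j := j1); have := at1_perm_range (j := j2).
by move=> r2 r1 e; apply: at1_perm_inj; lia.
Qed.

Lemma mem_drop_phi i : i <= n -> drop i (phi w) =i nonexc_values i.
Proof.
move=> hi; rewrite -(subKn hi); elim: (n - i) (leq_subr i n) => [|d IH] hd.
  by move=> x; rewrite subn0 drop_oversize ?size_phi // /nonexc_values subnn.
have IH' : drop (n - d.+1).+1 (phi w) =i nonexc_values (n - d.+1).+1.
  by rewrite (_ : (n - d.+1).+1 = n - d); [apply: IH; lia | lia].
have : n - d.+1 < n by lia.
move: (n - d.+1) IH' => {IH hi hd d} i IH hi x.
rewrite (drop_nth 0) ?size_phi // in_cons IH -/(at1 (phi w) i.+1).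
rewrite !mem_nonexc_values (_ : n - i = (n - i.+1).+1) /=; last lia.
case hN: (nonexc w i.+1) => /=.
  by rewrite at1_phi_nonexc //; lia.
have /norP[/eqP hin] : ~~ nonexc w i.+1 by rewrite hN.
rewrite -ltnNge => hexc.
have hi1 : 0 < i.+1 < n by lia.
have : at1 (phi w) i.+1 \in drop i.+1 (phi w).
  rewrite at1_phi_exc // -mem_undup -(mem_sort leq) mem_nth //.
  by rewrite size_sort (size_undup_nonexc_values IH) exc_rank_lt.
rewrite IH mem_nonexc_values.
by case: eqP => [->|_].
Qed.

Lemma size_undup_drop_phi i : i <= n ->
  size (undup (drop i (phi w))) = count (nonexc w) (iota i.+1 (n - i)).
Proof. by move=> hi; apply/size_undup_nonexc_values/mem_drop_phi. Qed.

Lemma at1_phi_exc_mem i : 0 < i < n -> i < at1 w i -> at1 (phi w) i \in drop i (phi w).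
Proof.
move=> hi hexc; rewrite at1_phi_exc // -mem_undup -(mem_sort leq) mem_nth //.
by rewrite size_sort size_undup_drop_phi ?exc_rank_lt //; lia.
Qed.

Lemma zero_mem_drop_phi i : i <= index 1 w -> 0 < n -> 0 \in drop i (phi w).
Proof.
move=> hi n0; have hq := index1_lt n0.
rewrite mem_drop_phi ?mem_nonexc_values; last lia.
apply/hasP; exists (index 1 w).+1; first by rewrite mem_iota; lia.
by rewrite /nonexc at1_index1 // orbT.
Qed.

Lemma rep_phi : 0 < n -> rep (phi w) = exc w.
Proof.
move=> n0; rewrite /rep dist_undup -(drop0 (phi w)) zero_mem_drop_phi //.
rewrite size_undup_drop_phi // subn0 count_nonexc // size_drop size_phi subn0.
suff: exc w <= n.-1 by lia.
by rewrite /exc (leq_trans (count_size _ _)) ?size_iota.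
Qed.

Lemma rlmin_nonexc i : 0 < i <= n -> all (fun y => at1 w i < y) (drop i w) -> nonexc w i.
Proof.
move=> hi /allP hall; apply/orP; right.
have := count_cat (fun x => x <= at1 w i) (take i w) (drop i w).
rewrite cat_take_drop count_leq_perm; last by have := at1_perm_range hi; lia.
rewrite (@eq_in_count _ _ pred0 (drop i w)) ?count_pred0; last first.
  by move=> y hy /=; rewrite leqNgt (hall y hy).
have := count_size (fun x => x <= at1 w i) (take i w); rewrite size_takel; lia.
Qed.

Lemma rlmin_phi_at i : 0 < i <= n ->
  all (fun y => at1 w i < y) (drop i w) =
  all (fun y => at1 (phi w) i < y) (drop i (phi w)).
Proof.
move=> hi; have hpi := at1_perm_range hi.
apply/idP/idP => hall.
  rewrite at1_phi_nonexc ?rlmin_nonexc //; move/allP: hall => hall; apply/allP => y.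
  rewrite mem_drop_phi ?mem_nonexc_values; last lia.
  case/hasP=> j; rewrite mem_iota => hj /andP[_ /eqP <-].
  have /hall : at1 w j \in drop i w by apply: at1_mem_drop; lia.
  by have := @at1_perm_range j; lia.
have [hin|] := ltnP i n; last by move=> hni; rewrite drop_oversize.
move/allP: hall => hall.
have hpi_le : at1 w i <= i.
  rewrite leqNgt; apply/negP => hexc.
  have /hall : at1 (phi w) i \in drop i (phi w) by apply: at1_phi_exc_mem; lia.
  by rewrite ltnn.
rewrite at1_phi_nonexc /nonexc ?hpi_le ?orbT // in hall.
apply/allP => y; rewrite -map_at1_drop => /mapP[j]; rewrite mem_iota => hj -> /=.
have := @at1_perm_range j; case: (leqP (at1 w j) j) => hpj; last lia.
have /hall : (at1 w j).-1 \in drop i (phi w).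
  rewrite mem_drop_phi ?mem_nonexc_values; last lia.
  by apply/hasP; exists j; rewrite ?mem_iota // /nonexc hpj orbT eqxx.
lia.
Qed.

Lemma rlmin_phi : rlmin (phi w) = rlmin w.
Proof.
rewrite !rlmin_drop size_phi; apply: eq_in_count => i.
by rewrite mem_iota /= => hi; rewrite -rlmin_phi_at //; lia.
Qed.

Lemma lrmax_before_index1_exc i : 0 < i <= index 1 w -> lrmax w i -> i < at1 w i.
Proof.
move=> hi /allP hmax; have n0 : 0 < n by move: hi; case: (w) => //=; lia.
have hq := index1_lt n0; have hpi := @at1_perm_range i.
have : {subset take i w <= iota 2 (at1 w i).-1}.
  move=> x; rewrite -map_at1_take; last lia.
  case/mapP=> j; rewrite mem_iota => hj ->.
  have := @at1_perm_range j; have := @pred_at1_eq0 j.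
  have : at1 w j <= at1 w i.
    case: (ltnP j i) => hji; last by rewrite (_ : j = i) //; lia.
    by have := hmax j; rewrite mem_iota; lia.
  by rewrite mem_iota; lia.
move/uniq_leq_size; rewrite take_uniq ?(perm_uniq w_perm) ?iota_uniq //.
have hin : i <= n by lia.
by rewrite size_iota size_takel //; lia.
Qed.

Lemma phi_eq0_before_index1 i : 0 < i <= index 1 w -> (at1 (phi w) i == 0) = lrmax w i.
Proof.
move=> hi; have n0 : 0 < n by move: hi; case: (w) => //=; lia.
have hq := index1_lt n0; have hpi := @at1_perm_range i.
have [hpi_le|hexc] := leqP (at1 w i) i.
  rewrite at1_phi_nonexc /nonexc ?hpi_le ?orbT ?pred_at1_eq0; try lia.
  rewrite (_ : (i == _) = false); last by apply/eqP; lia.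
  apply/esym/negP => /(lrmax_before_index1_exc hi); lia.
rewrite at1_phi_exc ?nth_sort_undup_eq0 -?lrmax_count_take ?zero_mem_drop_phi //; try lia.
by rewrite size_undup_drop_phi ?exc_rank_lt //; lia.
Qed.

Lemma phi_neq0_after_index1 i : (index 1 w).+1 < i <= n -> at1 (phi w) i != 0.
Proof.
move=> hi; have hpi := @at1_perm_range i.
have [hpi_le|hexc] := leqP (at1 w i) i.
  by rewrite at1_phi_nonexc /nonexc ?hpi_le ?orbT ?pred_at1_eq0; lia.
apply/eqP => e0; have := @at1_phi_exc_mem i.
rewrite e0 mem_drop_phi ?mem_nonexc_values; last lia.
case/(_ _ hexc)/hasP => [|j]; first by have := hpi; lia.
by rewrite mem_iota => hj /andP[_]; rewrite pred_at1_eq0; lia.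
Qed.

Lemma zero_phi : 0 < n -> zero (phi w) = lmaxz w.
Proof.
move=> n0; have hq := index1_lt n0; set q := index 1 w in hq *.
rewrite /zero -{1}(map_at1 (phi w)) count_map size_phi.
have -> : iota 1 n = iota 1 q ++ q.+1 :: iota q.+2 (n - q.+1).
  by rewrite {1}(_ : n = q + (n - q.+1).+1) ?iotaD ?add1n //; lia.
rewrite count_cat /= (@eq_in_count _ _ pred0 (iota q.+2 _)) ?count_pred0; last first.
  by move=> i; rewrite mem_iota => hi; apply/negbTE/phi_neq0_after_index1; lia.
rewrite at1_phi_nonexc /nonexc ?at1_index1 // ?orbT; last lia.
rewrite (@eq_in_count _ _ (lrmax w)) ?addn1 // => i.
by rewrite mem_iota => hi; apply: phi_eq0_before_index1; lia.
Qed.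

End PermutationWord.

Lemma size_perm_word n (p : 'S_n) : size (perm_word p) = n.
Proof. by rewrite size_map size_enum_ord. Qed.

Lemma perm_word_perm_eq n (p : 'S_n) : perm_eq (perm_word p) (iota 1 (size (perm_word p))).
Proof.
have -> : iota 1 (size (perm_word p)) = [seq (val i).+1 | i <- enum 'I_n].
  by rewrite size_perm_word (map_comp succn val) val_enum_ord -(iotaDl 1 0).
rewrite /perm_word (map_comp (fun i : 'I_n => (val i).+1) p) perm_map //.
apply: uniq_perm; rewrite ?enum_uniq //.
  by rewrite map_inj_uniq ?enum_uniq //; apply: perm_inj.
by move=> i; rewrite mem_enum -[i](permKV p) map_f ?mem_enum.
Qed.

Theorem lemma4p1 (n : nat) (hn : 0 < n) (p : 'S_n) :
  (exc (perm_word p), rlmin (perm_word p), lmaxz (perm_word p)) =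
  (rep (phi (perm_word p)), rlmin (phi (perm_word p)), zero (phi (perm_word p))).
Proof.
have w_perm := perm_word_perm_eq p.
have w_nonempty : 0 < size (perm_word p) by rewrite size_perm_word.
by rewrite rep_phi // rlmin_phi // zero_phi.
Qed.
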